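(* Let $k$ and $r$ be positive integers with $r \ge 2$, $r \mid k$ and $k \ge 2r$. Let $\chi : \{1, 2, \ldots, rk-2r+1\} \to \{0,1\}$ be a 2-coloring such that $\chi(1) = 0$ and $\chi(r-1) = 1$. Suppose at least one of the following holds: (a) $\chi(r) = 0$; (b) $\chi(k-2) = 1$; (c) $\chi(k-1) = 0$; (d) $\chi(k) = 0$; (e) $\chi(rk-2r-1) = 0$; (f) $\chi(rk-2r+1) = 1$. Then there exists a solution $(\hat{x}_1, \ldots, \hat{x}_k)$ of the equation $x_1 + \cdots + x_{k-1} = x_k$ with all $\hat{x}_i \in \{1, \ldots, rk-2r+1\}$ such that $\sum_{i=1}^k \chi(\hat{x}_i) \equiv 0 \pmod r$.
   Context: Solutions of the equation $x_1 + \cdots + x_{k-1} = x_k$ are taken in positive integers. A solution $(\hat{x}_1,\ldots,\hat{x}_k)$ is called $r$-zero-sum under $\chi$ if $\sum_{i=1}^k \chi(\hat{x}_i) \equiv 0 \pmod r$. *)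

From mathcomp Require Import all_boot.
Set Implicit Arguments. Unset Strict Implicit. Unset Printing Implicit Defensive.

(* A 2-coloring chi : {1..N} -> {0,1} is modelled as chi : nat -> bool,
   with colour value nat_of_bool (chi n) (false = 0, true = 1); only the
   values on 1..N are ever used. *)

Definition sol_in (k N : nat) (x : nat -> nat) : Prop :=
  (forall i, 1 <= i <= k -> 1 <= x i <= N) /\
  \sum_(1 <= i < k) x i = x k.

Definition zero_sum (r k : nat) (chi : nat -> bool) (x : nat -> nat) : Prop :=
  (\sum_(1 <= i < k.+1) nat_of_bool (chi (x i))) %% r = 0.

(* Since chi(1) = 0 and chi(r-1) = 1, r >= 3. Take two solutions of the shape
   (u, ..., u, v, ..., v, 1, ..., 1, T) with the same last entry T, where the
   colours of x_1, ..., x_(k-1) add up to 0 mod r for the first and to -1 mod r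
   for the second: whatever the colour of T, one of them is r-zero-sum.
   Such a pair exists whatever chi(r) is:
   - chi(r) = 1: r copies of r-1, versus r-2 copies of r and one r-1;
   - chi(r) = 0: r-2 copies of r, versus r-1 copies of r-1.
   Their common T is at most r^2 - 2r + k - 1 <= rk - 2r + 1 as k >= 2r. *)

From mathcomp Require Import all_boot zify.

Section Blocks.

Variable k : nat.
Hypothesis k_gt1 : 1 < k.

Definition blocks (a b u v T i : nat) : nat :=
  if i <= a then u else if i <= a + b then v else if i < k then 1 else T.

Definition blocks_total (a b u v : nat) : nat := a * u + b * v + (k - 1 - a - b).

Lemma sum_blocks (F : nat -> nat) (a b u v T : nat) : a + b < k ->
  \sum_(1 <= i < k) F (blocks a b u v T i) =
  a * F u + b * F v + (k - 1 - a - b) * F 1.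
Proof.
move=> abk.
rewrite (@big_cat_nat _ _ _ a.+1) //=; last by lia.
rewrite (@big_cat_nat _ _ _ (a + b).+1 _ k) //=; try lia.
rewrite (@eq_big_nat _ _ _ 1 a.+1 _ (fun=> F u)); last first.
  by move=> i ia; rewrite /blocks; do 3?case: ifP => //; lia.
rewrite (@eq_big_nat _ _ _ a.+1 (a + b).+1 _ (fun=> F v)); last first.
  by move=> i iab; rewrite /blocks; do 3?case: ifP => //; lia.
rewrite (@eq_big_nat _ _ _ (a + b).+1 k _ (fun=> F 1)); last first.
  by move=> i ik; rewrite /blocks; do 3?case: ifP => //; lia.
by rewrite !sum_nat_const_nat addnA; congr (_ * _ + _ * _ + _ * _); lia.
Qed.

Lemma blocks_last (a b u v T : nat) : a + b < k -> blocks a b u v T k = T.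
Proof. by move=> abk; rewrite /blocks; do 3?case: ifP => //; lia. Qed.

Lemma sol_in_blocks (N a b u v : nat) :
  a + b < k -> 0 < u -> 0 < v -> blocks_total a b u v <= N ->
  sol_in k N (blocks a b u v (blocks_total a b u v)).
Proof.
move=> abk u_gt0 v_gt0; rewrite /blocks_total => TN; split; last first.
  by rewrite (sum_blocks id) // blocks_last // muln1.
move=> i /andP[i_gt0 ik].
have ua : 0 < a -> u <= a * u by exact: leq_pmull.
have vb : 0 < b -> v <= b * v by exact: leq_pmull.
have [au bv] : a <= a * u /\ b <= b * v by rewrite !leq_pmulr.
by rewrite /blocks; do 3?case: ifP => ?; lia.
Qed.

Variable chi : nat -> bool.

Definition blocks_colour (a b u v : nat) : nat :=
  a * chi u + b * chi v + (k - 1 - a - b) * chi 1.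

Lemma zero_sum_blocks (r a b u v : nat) : a + b < k ->
  (blocks_colour a b u v + chi (blocks_total a b u v)) %% r = 0 ->
  zero_sum r k chi (blocks a b u v (blocks_total a b u v)).
Proof.
move=> abk; rewrite /zero_sum big_nat_recr /=; last by lia.
by rewrite (sum_blocks (fun y => nat_of_bool (chi y))) // blocks_last.
Qed.

Lemma zero_sum_blocks_switch (r N a b u v a' b' u' v' : nat) :
  a + b < k -> a' + b' < k -> 0 < u -> 0 < v -> 0 < u' -> 0 < v' ->
  blocks_total a b u v <= N ->
  blocks_total a' b' u' v' = blocks_total a b u v ->
  blocks_colour a b u v %% r = 0 -> (blocks_colour a' b' u' v').+1 %% r = 0 ->
  exists x : nat -> nat, sol_in k N x /\ zero_sum r k chi x.
Proof.
move=> abk abk' u_gt0 v_gt0 u_gt0' v_gt0' TN sameT colour0 colour1.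
case chiT: (chi (blocks_total a b u v)).
- exists (blocks a' b' u' v' (blocks_total a' b' u' v')).
  split; first by apply: sol_in_blocks; rewrite ?sameT.
  by apply: zero_sum_blocks; rewrite // sameT chiT addn1.
- exists (blocks a b u v (blocks_total a b u v)).
  split; first exact: sol_in_blocks.
  by apply: zero_sum_blocks; rewrite // chiT addn0.
Qed.

End Blocks.

Theorem lemma2 (k r : nat) (chi : nat -> bool) :
  2 <= r -> r %| k -> 2 * r <= k ->
  chi 1 = false -> chi (r - 1) = true ->
  (chi r = false \/ chi (k - 2) = true \/ chi (k - 1) = false \/
   chi k = false \/ chi (r * k - 2 * r - 1) = false \/
   chi (r * k - 2 * r + 1) = true) ->
  exists x : nat -> nat,
    sol_in k (r * k - 2 * r + 1) x /\ zero_sum r k chi x.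
Proof.
move=> r_ge2 _ k_ge2r chi1 chi_r1 _.
have r_gt2 : 2 < r.
  rewrite ltn_neqAle r_ge2 andbT; apply/eqP => r2.
  by move: chi_r1; rewrite -r2 chi1.
have mod_self n : n = r -> n %% r = 0 by move->; exact: modnn.
case chi_r: (chi r).
- apply: (@zero_sum_blocks_switch k _ chi r _ r 0 (r - 1) 1 (r - 2) 1 r (r - 1));
    rewrite /blocks_total /blocks_colour ?chi1 ?chi_r ?chi_r1 //=; try nia;
    by apply: mod_self; lia.
- apply: (@zero_sum_blocks_switch k _ chi r _ (r - 2) 0 r 1 (r - 1) 0 (r - 1) 1);
    rewrite /blocks_total /blocks_colour ?chi1 ?chi_r ?chi_r1 //=; try nia.
  + by rewrite !muln0 mod0n.
  + by apply: mod_self; lia.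
Qed.
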